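(* Let $n$ be a natural number and $T=(t_{ij})\in M_n(\mathbb{C})$. Then (i) $$\sup\{|\mathrm{tr}((R\circ C)T)|:R,C\in M_n(\mathbb{C}),\ \|R\|_r\le1,\ \|C\|_c\le1\}=\sup\Big\{\sum_{i=1}^n\Big(\sum_{j=1}^n|t_{ji}|^2b_{ij}\Big)^{1/2}: b_{ij}\ge0,\ \sum_{i=1}^nb_{ij}\le1 \text{ for all } j\Big\};$$ (ii) $$\sup\{|\mathrm{tr}((R\circ C)T)|:R,C\in M_n(\mathbb{C}),\ \|R\|_r\le1,\ \|C\|_c\le1\}\le n\max\{|t_{ij}|:1\le i,j\le n\}.$$
   Context: $R\circ C$ denotes the entrywise (Schur) product $(r_{ij}c_{ij})$. For a scalar matrix, $\|R\|_r:=\max_i(\sum_j|r_{ij}|^2)^{1/2}$ and $\|C\|_c:=\max_j(\sum_i|c_{ij}|^2)^{1/2}$. *)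

From mathcomp Require Import all_boot all_order all_algebra.
From mathcomp Require Import complex.
From mathcomp Require Import classical_sets reals.
Set Implicit Arguments. Unset Strict Implicit. Unset Printing Implicit Defensive.
Import Order.TTheory GRing.Theory Num.Theory.
Local Open Scope ring_scope.

Definition schur (K : pzRingType) (n : nat) (A B : 'M[K]_n) : 'M[K]_n :=
  \matrix_(i, j) (A i j * B i j).

Definition rownorm (R : rcfType) (n : nat) (A : 'M[R[i]]_n) : R :=
  \big[Num.max/0]_(i < n) Num.sqrt (\sum_(j < n) Normc.normc (A i j) ^+ 2).

Definition colnorm (R : rcfType) (n : nat) (A : 'M[R[i]]_n) : R :=
  \big[Num.max/0]_(j < n) Num.sqrt (\sum_(i < n) Normc.normc (A i j) ^+ 2).

Definition maxentry (R : rcfType) (n : nat) (A : 'M[R[i]]_n) : R :=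
  \big[Num.max/0]_(i < n) \big[Num.max/0]_(j < n) Normc.normc (A i j).

Definition schur_trace_set (R : realType) (n : nat) (T : 'M[R[i]]_n) : set R :=
  [set x | exists (A B : 'M[R[i]]_n),
     [/\ rownorm A <= 1, colnorm B <= 1 & x = Normc.normc (\tr (schur A B *m T))]].

Definition weight_set (R : realType) (n : nat) (T : 'M[R[i]]_n) : set R :=
  [set x | exists b : 'M[R]_n,
     [/\ (forall i j, 0 <= b i j), (forall j, \sum_(i < n) b i j <= 1) &
         x = \sum_(i < n) Num.sqrt (\sum_(j < n) Normc.normc (T j i) ^+ 2 * b i j)]].

(** Expanding the trace, [tr((R o C) T) = sum_i sum_j r_ij c_ij t_ji].  The triangle
    inequality followed by Cauchy-Schwarz in [j] for each row [i] bounds its modulus by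
    [sum_i (sum_j |t_ji|^2 |c_ij|^2)^(1/2)], and [b_ij := |c_ij|^2] has column sums at
    most [1].  Conversely, for such [b] the choice [c_ij := sqrt b_ij] and
    [r_ij := conj(t_ji) sqrt b_ij / s_i], where [s_i] is the [i]-th summand, makes every
    term of the trace real and nonnegative and attains the value exactly.  So both sets
    have the same down-closure, hence the same supremum.  For (ii), with [M = max |t_ij|]
    each summand is at most [M sqrt(a_i) <= M (1 + a_i) / 2] with [a_i = sum_j b_ij], and
    [sum_i a_i <= n]. *)
From mathcomp Require Import all_boot all_order all_algebra.
From mathcomp Require Import complex.
From mathcomp Require Import classical_sets reals.
From mathcomp Require Import ring lra.
Import Order.TTheory GRing.Theory Num.Theory.
Local Open Scope ring_scope.
Set Implicit Arguments. Unset Strict Implicit.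

Section RealSums.
Variables (R : rcfType) (I : finType).
Implicit Types x y : I -> R.

Lemma sum_sqr_eq0 x : \sum_i x i ^+ 2 = 0 -> forall i, x i = 0.
Proof.
move=> /psumr_eq0P x0 i; apply/eqP; rewrite -sqrf_eq0; apply/eqP.
by apply: x0 => // j _; exact: sqr_ge0.
Qed.

Lemma sqr_sqrtr_sum x : Num.sqrt (\sum_i x i ^+ 2) ^+ 2 = \sum_i x i ^+ 2.
Proof. by rewrite sqr_sqrtr // sumr_ge0 // => i _; exact: sqr_ge0. Qed.

Lemma ler_sum_mul_sqrt x y :
  \sum_i x i * y i <= Num.sqrt (\sum_i x i ^+ 2) * Num.sqrt (\sum_i y i ^+ 2).
Proof.
have X2 := sqr_sqrtr_sum x; have Y2 := sqr_sqrtr_sum y.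
set X := Num.sqrt _ in X2 *; set Y := Num.sqrt _ in Y2 *; set S := \sum_i _.
have [X0|XP] := eqVneq X 0.
  have x0 : forall i, x i = 0 by apply: sum_sqr_eq0; rewrite -X2 X0 expr0n.
  by rewrite X0 mul0r /S big1 // => i _; rewrite x0 mul0r.
have [Y0|YP] := eqVneq Y 0.
  have y0 : forall i, y i = 0 by apply: sum_sqr_eq0; rewrite -Y2 Y0 expr0n.
  by rewrite Y0 mulr0 /S big1 // => i _; rewrite y0 mulr0.
have XY_gt0 : 0 < X * Y by rewrite mulr_gt0 // lt_def ?XP ?YP sqrtr_ge0.
have expand : \sum_i (x i * Y - y i * X) ^+ 2 = 2 * (X * Y) * (X * Y - S).
  transitivity (Y ^+ 2 * \sum_i x i ^+ 2 - 2 * X * Y * S + X ^+ 2 * \sum_i y i ^+ 2).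
    rewrite /S !mulr_sumr -sumrB -big_split /=.
    by apply: eq_bigr => i _; ring.
  by rewrite -X2 -Y2; ring.
have : 0 <= \sum_i (x i * Y - y i * X) ^+ 2 by apply: sumr_ge0 => i _; exact: sqr_ge0.
by rewrite expand pmulr_rge0 ?subr_ge0 // mulr_gt0.
Qed.

End RealSums.

Lemma sqrtr_le_mean (R : rcfType) (a : R) : 0 <= a -> Num.sqrt a <= (1 + a) / 2.
Proof.
move=> a0; rewrite -{2}(sqr_sqrtr a0).
have := sqr_ge0 (Num.sqrt a - 1); nra.
Qed.

Lemma bigmax_sqrtr_le1 (R : rcfType) (I : finType) (F : I -> R) :
  \big[Num.max/0]_i Num.sqrt (F i) <= 1 <-> forall i, F i <= 1.
Proof.
have sqrt_le1 a : (Num.sqrt a <= 1) = (a <= 1) by rewrite -[X in _ <= X]sqrtr1 ler_sqrt.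
split=> [/bigmax_leP [_ F_le1] i | F_le1]; first by rewrite -sqrt_le1 F_le1.
by apply/bigmax_leP; split=> // i _; rewrite sqrt_le1.
Qed.

Section ComplexNorm.
Variable R : rcfType.
Local Open Scope complex_scope.
Local Notation normc := (@Normc.normc R).

Lemma normc_ge0 (z : R[i]) : 0 <= normc z.
Proof. by case: z => a b; exact: sqrtr_ge0. Qed.

Lemma normc_real (x : R) : normc x%:C = `|x|.
Proof. by rewrite /Normc.normc /= expr0n /= addr0 sqrtr_sqr. Qed.

Lemma normc_conj (z : R[i]) : normc z^* = normc z.
Proof. by case: z => a b; rewrite /= sqrrN. Qed.

Lemma mulJc (z : R[i]) : z^* * z = (normc z ^+ 2)%:C.
Proof.
case: z => a b; rewrite /= sqr_sqrtr ?addr_ge0 ?sqr_ge0 //.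
by apply/eqP; rewrite eq_complex /=; apply/andP; split; apply/eqP; ring.
Qed.

Lemma normc_sum (I : finType) (F : I -> R[i]) :
  normc (\sum_i F i) <= \sum_i normc (F i).
Proof. exact: (@ler_norm_sum R (Rcomplex R)). Qed.

End ComplexNorm.

Section MatrixNorms.
Variables (R : rcfType) (n : nat).
Implicit Types A T : 'M[R[i]]_n.
Local Notation normc := (@Normc.normc R).

Lemma rownorm_le1 A : rownorm A <= 1 <-> forall i, \sum_j normc (A i j) ^+ 2 <= 1.
Proof. exact: bigmax_sqrtr_le1. Qed.

Lemma colnorm_le1 A : colnorm A <= 1 <-> forall j, \sum_i normc (A i j) ^+ 2 <= 1.
Proof. exact: bigmax_sqrtr_le1. Qed.

Lemma normc_le_maxentry T i j : normc (T i j) <= maxentry T.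
Proof.
apply: le_trans (le_bigmax _ _ i).
exact: (le_bigmax _ (fun j => normc (T i j)) j).
Qed.

End MatrixNorms.

Lemma mxtrace_schur_mul (K : pzRingType) (n : nat) (A B T : 'M[K]_n) :
  \tr (schur A B *m T) = \sum_i \sum_j A i j * B i j * T j i.
Proof.
by apply: eq_bigr => i _; rewrite mxE; apply: eq_bigr => j _; rewrite mxE.
Qed.

Definition weight_sum (R : rcfType) (n : nat) (T : 'M[R[i]]_n) (b : 'M[R]_n) : R :=
  \sum_(i < n) Num.sqrt (\sum_(j < n) Normc.normc (T j i) ^+ 2 * b i j).

Lemma normc_tr_schur_le_weight_sum (R : rcfType) (n : nat) (A B T : 'M[R[i]]_n) :
    rownorm A <= 1 ->
  Normc.normc (\tr (schur A B *m T)) <=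
  weight_sum T (map_mx (fun z => Normc.normc z ^+ 2) B).
Proof.
move=> /rownorm_le1 A_row; rewrite mxtrace_schur_mul.
apply: le_trans (normc_sum _) _; apply: ler_sum => i _.
apply: le_trans (normc_sum _) _.
under eq_bigr do rewrite !Normc.normcM -mulrA.
apply: le_trans (ler_sum_mul_sqrt _ _) _.
rewrite -[leRHS]mul1r; apply: ler_pM; rewrite ?sqrtr_ge0 //.
  by rewrite -sqrtr1 ler_wsqrtr.
by apply: ler_wsqrtr; apply: ler_sum => j _; rewrite mxE exprMn mulrC.
Qed.

Section WeightSumAttained.
Variables (R : rcfType) (n : nat) (T : 'M[R[i]]_n) (b : 'M[R]_n).
Hypotheses (b_ge0 : forall i j, 0 <= b i j) (b_col_le1 : forall j, \sum_i b i j <= 1).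
Local Open Scope complex_scope.
Local Notation normc := (@Normc.normc R).

Let s i := Num.sqrt (\sum_j normc (T j i) ^+ 2 * b i j).

Let sqr_s i : s i ^+ 2 = \sum_j normc (T j i) ^+ 2 * b i j.
Proof. by rewrite sqr_sqrtr // sumr_ge0 // => j _; rewrite mulr_ge0 ?sqr_ge0. Qed.

Let sqr_sqrt_b i j : Num.sqrt (b i j) ^+ 2 = b i j.
Proof. exact: sqr_sqrtr. Qed.

(* If [s i = 0], row [i] of [A] vanishes since [x / 0 = 0]. *)
Let A := \matrix_(i, j) ((T j i)^* * (Num.sqrt (b i j) / s i)%:C).
Let B := \matrix_(i, j) (Num.sqrt (b i j))%:C.

Lemma weight_sum_attained : exists A B : 'M[R[i]]_n,
  [/\ rownorm A <= 1, colnorm B <= 1 &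
      \tr (schur A B *m T) = (weight_sum T b)%:C].
Proof.
exists A, B; split.
- apply/rownorm_le1 => i.
  have -> : \sum_j normc (A i j) ^+ 2 = s i ^+ 2 / s i ^+ 2.
    rewrite {1}sqr_s mulr_suml; apply: eq_bigr => j _.
    rewrite mxE Normc.normcM normc_conj normc_real ger0_norm ?divr_ge0 ?sqrtr_ge0 //.
    by rewrite exprMn expr_div_n sqr_sqrt_b mulrA.
  have [->|s_neq0] := eqVneq (s i) 0; first by rewrite expr0n mul0r ler01.
  by rewrite divff // expf_neq0.
- apply/colnorm_le1 => j; rewrite (le_trans _ (b_col_le1 j)) //.
  by apply: ler_sum => i _; rewrite mxE normc_real ger0_norm ?sqrtr_ge0 // sqr_sqrt_b.
rewrite mxtrace_schur_mul /weight_sum rmorph_sum; apply: eq_bigr => i _.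
have term j : A i j * B i j * T j i = (normc (T j i) ^+ 2 * b i j / s i)%:C.
  rewrite /A /B !mxE.
  have -> : forall (c : R[i]) (u v : R), c^* * u%:C * v%:C * c = c^* * c * (u * v)%:C.
    by move=> c u v; rewrite rmorphM /=; ring.
  rewrite mulJc -rmorphM; congr _%:C.
  by rewrite [_ / s i * _]mulrAC -expr2 sqr_sqrt_b mulrA.
rewrite (eq_bigr _ (fun j _ => term j)) -rmorph_sum -mulr_suml -{1}sqr_s -/(s i).
congr _%:C; have [->|s_neq0] := eqVneq (s i) 0; first by rewrite invr0 mulr0.
by rewrite expr2 mulfK.
Qed.

End WeightSumAttained.

Lemma weight_sum_le_maxentry (R : rcfType) (n : nat) (T : 'M[R[i]]_n) (b : 'M[R]_n) :
    (forall i j, 0 <= b i j) -> (forall j, \sum_i b i j <= 1) ->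
  weight_sum T b <= n%:R * maxentry T.
Proof.
move=> b_ge0 b_col_le1; set M := maxentry T.
have M_ge0 : 0 <= M by exact: bigmax_ge_id.
have row_le i : Num.sqrt (\sum_j Normc.normc (T j i) ^+ 2 * b i j)
                <= M / 2 * (1 + \sum_j b i j).
  have rowb_ge0 : 0 <= \sum_j b i j by exact: sumr_ge0.
  apply: (@le_trans _ _ (Num.sqrt (M ^+ 2 * \sum_j b i j))).
    apply: ler_wsqrtr; rewrite mulr_sumr; apply: ler_sum => j _.
    rewrite ler_wpM2r //; apply: lerXn2r; rewrite ?nnegrE ?normc_ge0 ?M_ge0 //.
    exact: normc_le_maxentry.
  rewrite sqrtrM ?sqr_ge0 // sqrtr_sqr ger0_norm //.
  have := sqrtr_le_mean rowb_ge0; nra.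
have total_le : \sum_i \sum_j b i j <= n%:R.
  rewrite exchange_big /=; apply: le_trans (ler_sum _ (fun j _ => b_col_le1 j)) _.
  by rewrite sumr_const card_ord.
apply: le_trans (ler_sum _ (fun i _ => row_le i)) _.
rewrite -mulr_sumr big_split /= sumr_const card_ord -[1 *+ n]/(n%:R); nra.
Qed.

Lemma sup_eq_of_cofinal (R : realType) (A B : set R) :
  (A `<=` down B -> B `<=` down A -> sup A = sup B)%classic.
Proof.
have down_sub (X Y : set R) : (X `<=` down Y -> down X `<=` down Y)%classic.
  move=> XY x /downP [y /XY /downP [z Yz yz] xy].
  by apply/downP; exists z => //; exact: le_trans xy yz.
move=> AB BA; rewrite -sup_down -[RHS]sup_down; congr sup.
by apply/seteqP; split; apply: down_sub.
Qed.

Section SchurTraceSupremum.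
Variables (R : realType) (n : nat) (T : 'M[R[i]]_n).
Local Open Scope classical_set_scope.

Lemma schur_trace_set_sub_down_weight_set : schur_trace_set T `<=` down (weight_set T).
Proof.
move=> _ [A [B [A_row /colnorm_le1 B_col ->]]]; apply/downP.
exists (weight_sum T (map_mx (fun z => Normc.normc z ^+ 2) B)).
  exists (map_mx (fun z => Normc.normc z ^+ 2) B); split => // [i j | j].
    by rewrite mxE sqr_ge0.
  by under eq_bigr do rewrite mxE.
exact: normc_tr_schur_le_weight_sum.
Qed.

Lemma weight_set_sub_schur_trace_set : weight_set T `<=` schur_trace_set T.
Proof.
move=> _ [b [b_ge0 b_col_le1 ->]].
have [A [B [A_row B_col trE]]] := weight_sum_attained T b_ge0 b_col_le1.
exists A, B; split => //.
by rewrite trE normc_real ger0_norm // sumr_ge0 // => i _; exact: sqrtr_ge0.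
Qed.

Lemma weight_set_neq0 : weight_set T !=set0.
Proof.
exists (weight_sum T 0), 0; split => // [i j | j]; first by rewrite mxE.
by rewrite big1 // => i _; rewrite mxE.
Qed.

Lemma weight_set_ub : ubound (weight_set T) (n%:R * maxentry T).
Proof. by move=> _ [b [b_ge0 b_col_le1 ->]]; exact: weight_sum_le_maxentry. Qed.

End SchurTraceSupremum.

Unset Implicit Arguments.

Theorem mainTheorem4 (R : realType) (n : nat) (T : 'M[R[i]]_n) :
  sup (schur_trace_set T) = sup (weight_set T) /\
  sup (schur_trace_set T) <= n%:R * maxentry T.
Proof.
have sup_eq : sup (schur_trace_set T) = sup (weight_set T).
  apply: sup_eq_of_cofinal; first exact: schur_trace_set_sub_down_weight_set.
  by move=> x /weight_set_sub_schur_trace_set; exact: le_down.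
split=> //; rewrite sup_eq; apply: ge_sup; [exact: weight_set_neq0 | exact: weight_set_ub].
Qed.
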